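(* Let $\{\mathbf Z_i(n), i\in\mathbb N\}$ be a critical GWBP/$\infty$ with mean matrix $\mathbf M\in\mathcal M_1$ and $\mathbf F(\mathbf s)\neq\mathbf M\mathbf s$. For $i\in\mathbb N$ and $\mathbf s\in\mathbf S$ define $\epsilon_{2,i}(\mathbf 1-\mathbf s)$ by $$\sum_{j\in\mathbb N}M_{ij}(1-s_j)-\sum_{j\in\mathbb N}Q_{ij}(s_j)=M_i\,\epsilon_{2,i}(\mathbf 1-\mathbf s).$$ Then $$\lim_{\mathbf s\in\mathbf S,\ \|\mathbf 1-\mathbf s\|_\infty\to0}\ \sup_{i\in\mathbb N}\frac{|\epsilon_{2,i}(\mathbf 1-\mathbf s)|}{\|\mathbf 1-\mathbf s\|_\infty}=0.$$ Moreover, with $\epsilon_{2,i}(\mathbf Q(n-1;\mathbf s))$ defined by $$\sum_{j\in\mathbb N}M_{ij}Q_j(n-1;\mathbf s)-\sum_{j\in\mathbb N}Q_{ij}\big(F_j(n-1;\mathbf s)\big)=M_i\,\epsilon_{2,i}(\mathbf Q(n-1;\mathbf s)),$$ one has $$\lim_{n\to\infty}\sup_{\mathbf s\in\mathbf S,\ i\in\mathbb N}\frac{|\epsilon_{2,i}(\mathbf Q(n-1;\mathbf s))|}{\mathcal Q(n-1;\mathbf s)}=0.$$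
   Context: A GWBP/$\infty$ has types $\mathbb N=\{1,2,\dots\}$. Each particle lives one unit of time; a type-$i$ particle produces, independently of everything else, a random vector $\mathbf Z_i=(Z_{ij})_{j\in\mathbb N}$ of children, with $Z_i:=\sum_jZ_{ij}<\infty$ a.s. $\mathbf Z_i(n)=(Z_{ij}(n))_j$ is the generation-$n$ population from one type-$i$ particle. For $\mathbf s\in[0,1]^{\mathbb N}$: $F_i(n;\mathbf s)=\mathbb E\prod_js_j^{Z_{ij}(n)}$, $F_i(\mathbf s)=F_i(1;\mathbf s)$, $Q_i(n;\mathbf s)=1-F_i(n;\mathbf s)$, $\mathbf Q(n;\mathbf s)=(Q_i(n;\mathbf s))_i$, $\mathcal Q(n;\mathbf s)=\sup_iQ_i(n;\mathbf s)$, $Q_{ij}(s)=1-\mathbb Es^{Z_{ij}}$ for $s\in[0,1]$, $\|\mathbf 1-\mathbf s\|_\infty=\sup_j(1-s_j)$. $\mathbf S=\{\mathbf s\in[0,1]^{\mathbb N}:\mathbf s\neq\mathbf 1\}$. ''$\mathbf F(\mathbf s)\neq\mathbf M\mathbf s$'' means it is not true that $F_i(\mathbf s)=\sum_jM_{ij}s_j$ for all $i,\mathbf s$. Mean matrix $\mathbf M=(M_{ij})$, $M_{ij}=\mathbb EZ_{ij}$, $M^{(n)}_{ij}=\mathbb EZ_{ij}(n)$, $M_i=\sum_jM_{ij}=\mathbb EZ_i$. Irreducible: for all $i,j$ some $M^{(n)}_{ij}>0$; aperiodic: gcd of such $n$ is 1; then $\lim_n(M^{(n)}_{ij})^{1/n}=1/R$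 for a common $R$; critical: $R=1$. $\mathbf M\in\mathcal M_1$ means: (i) irreducible, aperiodic, $R=1$, 1-recurrent ($\sum_nM^{(n)}_{ij}=\infty$) and 1-positive ($\lim_nM^{(n)}_{ij}>0$ for all $i,j$); then there are positive eigenvectors $\mathbf v\mathbf M=\mathbf v$, $\mathbf M\mathbf u^T=\mathbf u^T$, unique up to positive multiples, normalized with $\sum_jv_ju_j=1$; (ii) $\sum_jv_j=1$ and $\sup_iu_i<\infty$; (iii) $\lim_{N\to\infty}\sup_iM_i^{-1}\sum_{j>N}M_{ij}=0$ and $\lim_{K\to\infty}\sup_iM_i^{-1}\mathbb E[Z_i;Z_i>K]=0$. *)

From HB Require Import structures.
From mathcomp Require Import all_boot all_order all_algebra.
From mathcomp Require Import all_classical all_reals all_analysis.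
Set Implicit Arguments. Unset Strict Implicit. Unset Printing Implicit Defensive.
Import Order.TTheory GRing.Theory Num.Theory numFieldNormedType.Exports.
Local Open Scope classical_set_scope.
Local Open Scope ring_scope.

(* Types are indexed by nat = {0,1,2,...} (relabelling of {1,2,...}).
   The offspring law of a type-i particle is a probability distribution
   p i on finitely supported count vectors, encoded as  z : seq nat,
   with Z_{ij} = nth 0 z j (types beyond size z have 0 children). *)

Section GW.
Variable R : realType.

Definition offspring_law (p : nat -> seq nat -> R) : Prop :=
  (forall i z, 0 <= p i z) /\
  (forall i, (\esum_(z in [set: seq nat]) (p i z)%:E = 1)%E).

Definition Zcnt (z : seq nat) (j : nat) : nat := nth 0%N z j.

Definition unit_cube (s : nat -> R) : Prop := forall j, 0 <= s j <= 1.
Definition Sset (s : nat -> R) : Prop := unit_cube s /\ exists j, s j != 1.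

Definition pgf (p : nat -> seq nat -> R) (s : nat -> R) (i : nat) : R :=
  fine (\esum_(z in [set: seq nat])
          (p i z * \prod_(j < size z) s j ^+ Zcnt z j)%:E).

(* F_i(n; s): n-th iterate of the generating function (branching property) *)
Fixpoint pgfn (p : nat -> seq nat -> R) (n : nat) (s : nat -> R) : nat -> R :=
  match n with
  | 0 => s
  | n'.+1 => pgf p (pgfn p n' s)
  end.

Definition Qn p n s i : R := 1 - pgfn p n s i.
Definition Qsup p n s : R := sup [set Qn p n s i | i in [set: nat]].

Definition Qij (p : nat -> seq nat -> R) (i j : nat) (x : R) : R :=
  1 - fine (\esum_(z in [set: seq nat]) (p i z * x ^+ Zcnt z j)%:E).

Definition normInf (s : nat -> R) : R := sup [set 1 - s j | j in [set: nat]].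

Definition Mij (p : nat -> seq nat -> R) (i j : nat) : \bar R :=
  \esum_(z in [set: seq nat]) (p i z * (Zcnt z j)%:R)%:E.
Definition Mi (p : nat -> seq nat -> R) (i : nat) : \bar R :=
  \esum_(z in [set: seq nat]) (p i z * (sumn z)%:R)%:E.

Fixpoint Mn (p : nat -> seq nat -> R) (n : nat) (i j : nat) : \bar R :=
  match n with
  | 0 => ((i == j)%:R)%:E
  | n'.+1 => \esum_(k in [set: nat]) (Mn p n' i k * Mij p k j)%E
  end.

Definition pgf_linear (p : nat -> seq nat -> R) : Prop :=
  forall i s, unit_cube s ->
    pgf p s i = fine (\esum_(j in [set: nat]) (Mij p i j * (s j)%:E)%E).

Definition eps2 (p : nat -> seq nat -> R) (s : nat -> R) (i : nat) : R :=
  (fine (\esum_(j in [set: nat]) (Mij p i j * (1 - s j)%:E)%E)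
   - fine (\esum_(j in [set: nat]) (Qij p i j (s j))%:E)) / fine (Mi p i).

Definition irreducible p : Prop :=
  forall i j, exists n, (0 < n)%N /\ (0 < Mn p n i j)%E.
Definition aperiodic p : Prop :=
  forall i (d : nat), (forall n, (0 < n)%N -> (0 < Mn p n i i)%E -> (d %| n)%N) ->
    d = 1%N.
Definition critical p : Prop :=
  forall i j, (fun n : nat => powR (fine (Mn p n i j)) (n%:R)^-1 : R) @ \oo --> (1 : R).
Definition one_recurrent p : Prop :=
  forall i j, (\esum_(n in [set: nat]) Mn p n i j = +oo)%E.
Definition one_positive p : Prop :=
  forall i j, exists l : R, 0 < l /\ Mn p n i j @[n --> \oo] --> l%:E.

Definition classM1 (p : nat -> seq nat -> R) : Prop :=
  (* finite means M_i < oo (implicit in the paper: M_i^{-1}, eps_{2,i}) *)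
  (forall i, Mi p i < +oo)%E /\
  irreducible p /\ aperiodic p /\ critical p /\ one_recurrent p /\ one_positive p /\
  (exists v u : nat -> R,
      (forall j, 0 < v j) /\ (forall i, 0 < u i) /\
      (forall j, \esum_(i in [set: nat]) ((v i)%:E * Mij p i j) = (v j)%:E)%E /\
      (forall i, \esum_(j in [set: nat]) (Mij p i j * (u j)%:E) = (u i)%:E)%E /\
      (\esum_(j in [set: nat]) (v j * u j)%:E = 1)%E /\
      (\esum_(j in [set: nat]) (v j)%:E = 1)%E /\
      (exists B : R, forall i, u i <= B)) /\
  (forall e : R, 0 < e -> exists N0 : nat, forall N, (N0 <= N)%N -> forall i,
      (\esum_(j in [set j | (N < j)%N]) Mij p i j <= e%:E * Mi p i)%E) /\
  (forall e : R, 0 < e -> exists K0 : nat, forall K, (K0 <= K)%N -> forall i,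
      (\esum_(z in [set z | (K < sumn z)%N]) (p i z * (sumn z)%:R)%:E
         <= e%:E * Mi p i)%E).

End GW.

From HB Require Import structures.
From mathcomp Require Import all_boot all_order all_algebra.
From mathcomp Require Import all_classical all_reals all_analysis.
From mathcomp Require Import ring lra.
Import Order.TTheory GRing.Theory Num.Theory.
Local Open Scope classical_set_scope.
Local Open Scope ring_scope.
Set Implicit Arguments. Unset Strict Implicit. Unset Printing Implicit Defensive.

(* Write [Z] for the offspring vector of a type-[i] particle. Then
   [M_i eps_{2,i}(1 - s)] is the expectation of [\sum_j g(s_j, Z_j)], where
   [g(x, k) = x^k - 1 + k (1 - x)] is Bernoulli's gap, bounded both by
   [k (1 - x)] and by [k^2 (1 - x)^2]. With [d = ||1 - s||] and splitting on
   [|Z| <= K], this expectation is at most [(d^2 K + d tail_K) M_i], and the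
   uniform tail condition (iii) makes it [o(d) M_i] uniformly in [i].

   The second claim is the first one at [F(n - 1; s)], once
   [sup_{s,i} Q_i(n; s) -> 0]. This uniform extinction follows from
   [Q_i(n + 1; s) <= \sum_j M_ij Q_j(n; s)], the boundedness of [M_i] and the
   type tail condition, provided every type dies out: [F_j(n; 0) -> 1].
   For that, [W(s) = \sum_i v_i (1 - s_i)] drops under [s |-> F(s)] by the
   nonnegative [v]-average of the remainders [E (s^Z - 1 + \sum_j Z_j (1 - s_j))].
   Along [F(n; 0)] these drops add up to at most [W(0) = 1], so the remainder
   vanishes at [1 - q], where [q] is the survival probability. If some [q_j > 0],
   irreducibility makes all [q_i > 0], so every offspring vector has at most
   one child; [v M = v] with [\sum_i v_i = 1] then forces exactly one child,
   i.e. [F] is linear. *)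

Section esum_nonneg.
Variable R : realType.
Local Open Scope ereal_scope.

Lemma esumZl_le (T : choiceType) (D : set T) (b : T -> \bar R) (c : R) :
  (0 <= c)%R -> (forall x, 0 <= b x) ->
  \esum_(x in D) (c%:E * b x) <= c%:E * \esum_(x in D) b x.
Proof.
move=> c0 b0; apply: ge_ereal_sup => _ [X [finX XD] <-].
rewrite fsbig_finite // -ge0_sume_distrr; last by move=> x _; apply: b0.
apply: lee_wpmul2l; first by rewrite lee_fin.
by rewrite -fsbig_finite //; apply: ereal_sup_ubound; exists X.
Qed.

Lemma esumZl (T : choiceType) (D : set T) (b : T -> \bar R) (c : R) :
  (0 <= c)%R -> (forall x, 0 <= b x) ->
  \esum_(x in D) (c%:E * b x) = c%:E * \esum_(x in D) b x.
Proof.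
move=> c0 b0; apply/eqP; rewrite eq_le esumZl_le //=.
have [->|cn0] := eqVneq c 0%R.
  by rewrite mul0e esum_ge0 // => x _; rewrite mul0e.
have cp : (0 < c)%R by rewrite lt_def cn0 c0.
rewrite -lee_pdivlMl //; apply: le_trans (esumZl_le _ _ _); last first.
- by move=> x; rewrite mule_ge0 // lee_fin.
- by rewrite invr_ge0.
by apply: le_esum => x _; rewrite muleA -EFinM mulVf // mul1e.
Qed.

Lemma esumZr (T : choiceType) (D : set T) (b : T -> \bar R) (c : R) :
  (0 <= c)%R -> (forall x, 0 <= b x) ->
  \esum_(x in D) (b x * c%:E) = (\esum_(x in D) b x) * c%:E.
Proof.
by move=> c0 b0; rewrite muleC -esumZl //; apply: eq_esum => x _; rewrite muleC.
Qed.

Lemma exchange_esum (T1 T2 : choiceType) (f : T1 -> T2 -> \bar R) :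
  (forall x y, 0 <= f x y) ->
  \esum_(x in [set: T1]) \esum_(y in [set: T2]) f x y =
  \esum_(y in [set: T2]) \esum_(x in [set: T1]) f x y.
Proof.
move=> f0; rewrite !esum_esum //.
rewrite (reindex_esum ([set: T2] `*`` (fun=> [set: T1])) _ (fun x => (x.2, x.1))) //.
split => //.
- by move=> [i1 i2] [j1 j2] /= _ _ [] -> ->.
- by move=> [i1 i2] _ /=; exists (i2, i1).
Qed.

Lemma esum_ord (a : nat -> \bar R) (n : nat) :
  (forall j, 0 <= a j) -> (forall j, (n <= j)%N -> a j = 0) ->
  \esum_(j in [set: nat]) a j = \sum_(j < n) a j.
Proof.
move=> a0 an; rewrite (esumID `I_n); last by move=> j _; apply: a0.
rewrite [X in _ + X]esum1 ?adde0; last first.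
  by move=> j [_ /negP]; rewrite -leqNgt => /an.
by rewrite setTI esum_fset // -fsbig_ord.
Qed.

Lemma esum_ge_term (T : choiceType) (a : T -> \bar R) x :
  (forall y, 0 <= a y) -> a x <= \esum_(y in [set: T]) a y.
Proof.
move=> a0; apply: esum_ge; exists [set x]; first by split; [exact: finite_set1|].
by rewrite fsbig_set1.
Qed.

Lemma esum_gt0_ex (T : choiceType) (D : set T) (a : T -> \bar R) :
  (forall x, 0 <= a x) -> 0 < \esum_(x in D) a x -> exists2 x, D x & 0 < a x.
Proof.
move=> a0 Da; apply: contrapT => Dn; move: Da.
rewrite esum1 ?ltxx // => x Dx; apply/eqP; rewrite eq_le a0 andbT leNgt.
by apply/negP => ax; apply: Dn; exists x.
Qed.

End esum_nonneg.

Section bernoulli_gap.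
Variable R : realDomainType.
Implicit Types x y : R.

Definition bernoulli_gap x (k : nat) : R := x ^+ k - 1 + k%:R * (1 - x).

Lemma bernoulli_gapS x k :
  bernoulli_gap x k.+1 = x * bernoulli_gap x k + k%:R * (1 - x) ^+ 2.
Proof. by rewrite /bernoulli_gap exprS -natr1; ring. Qed.

Lemma bernoulli_gap0 x : bernoulli_gap x 0 = 0.
Proof. by rewrite /bernoulli_gap expr0 mul0r subrr addr0. Qed.

Lemma bernoulli_gap_ge0 x k : 0 <= x <= 1 -> 0 <= bernoulli_gap x k.
Proof.
move=> /andP[x0 x1]; elim: k => [|k IH].
  by rewrite bernoulli_gap0.
by rewrite bernoulli_gapS addr_ge0 ?mulr_ge0 ?subr_ge0.
Qed.

Lemma bernoulli_gap_le_lin x k : 0 <= x <= 1 ->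
  bernoulli_gap x k <= k%:R * (1 - x).
Proof.
move=> /andP[x0 x1]; have := exprn_ile1 k x0 x1.
rewrite /bernoulli_gap; lra.
Qed.

Lemma bernoulli_gap_le_sqr x k : 0 <= x <= 1 ->
  bernoulli_gap x k <= k%:R ^+ 2 * (1 - x) ^+ 2.
Proof.
move=> x01; elim: k => [|k IH]; first by rewrite bernoulli_gap0 expr0n mul0r.
have g0 := bernoulli_gap_ge0 k x01; case/andP: x01 => x0 x1.
have k0 : 0 <= k%:R :> R by [].
have d0 : 0 <= (1 - x) ^+ 2 by rewrite sqr_ge0.
rewrite bernoulli_gapS -natr1; set d := (1 - x) ^+ 2 in d0 IH *.
have : x * bernoulli_gap x k <= bernoulli_gap x k by rewrite ler_piMl.
rewrite !expr2 in IH *; nra.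
Qed.

Lemma bernoulli_gap_gt0 x k : 0 <= x < 1 -> (2 <= k)%N -> 0 < bernoulli_gap x k.
Proof.
move=> /andP[x0 x1]; case: k => [//|[//|k]] _.
rewrite bernoulli_gapS ltr_pwDr ?mulr_gt0 ?exprn_gt0 ?subr_gt0 //.
by rewrite mulr_ge0 // bernoulli_gap_ge0 // x0 ltW.
Qed.

Lemma subrXX_le x y k : 0 <= x -> x <= y -> y <= 1 -> y ^+ k - x ^+ k <= k%:R * (y - x).
Proof.
move=> x0 xy y1; elim: k => [|k IH]; first by rewrite !expr0 subrr mul0r.
have xk0 : 0 <= x ^+ k by rewrite exprn_ge0.
have xk1 : x ^+ k <= 1 by rewrite exprn_ile1 // (le_trans xy).
have d0 : 0 <= y ^+ k - x ^+ k by rewrite subr_ge0 lerXn2r // nnegrE (le_trans x0).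
have -> : y ^+ k.+1 - x ^+ k.+1 = y * (y ^+ k - x ^+ k) + x ^+ k * (y - x).
  by rewrite !exprS; ring.
rewrite -natr1; nra.
Qed.

End bernoulli_gap.

Section monomial_gap.
Variables (R : realDomainType) (k : nat -> nat).
Implicit Types (s t : nat -> R) (n : nat).

Definition monomial s n : R := \prod_(j < n) s j ^+ k j.

Definition monomial_gap s n : R :=
  monomial s n - 1 + \sum_(j < n) (k j)%:R * (1 - s j).

Lemma monomial_gapS s n : monomial_gap s n.+1 = monomial_gap s n
  + (k n)%:R * (1 - s n) * (1 - monomial s n) + monomial s n * bernoulli_gap (s n) (k n).
Proof. by rewrite /monomial_gap /monomial !big_ord_recr /= /bernoulli_gap; ring. Qed.

Lemma monomial_ge0 s n : (forall j, 0 <= s j <= 1) -> 0 <= monomial s n.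
Proof. by move=> s01; apply: prodr_ge0 => j _; rewrite exprn_ge0 //; case/andP: (s01 j). Qed.

Lemma monomial_le1 s n : (forall j, 0 <= s j <= 1) -> monomial s n <= 1.
Proof.
by move=> s01; apply: prodr_ile1 => j _; case/andP: (s01 j) => ? ?; rewrite exprn_ge0 ?exprn_ile1.
Qed.

Lemma le_monomial s t n : (forall j, 0 <= s j <= 1) -> (forall j, s j <= t j) ->
  monomial s n <= monomial t n.
Proof.
move=> s01 st; apply: ler_prod => j _; case/andP: (s01 j) => s0 _.
by rewrite exprn_ge0 // lerXn2r // nnegrE (le_trans s0).
Qed.

Lemma monomial_gap_ge0 s n : (forall j, 0 <= s j <= 1) -> 0 <= monomial_gap s n.
Proof.
move=> s01; elim: n => [|n IH]; first by rewrite /monomial_gap /monomial !big_ord0 subrr addr0.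
have := monomial_le1 n s01; have := monomial_ge0 n s01; case/andP: (s01 n) => s0 s1.
have := bernoulli_gap_ge0 (k n) (s01 n); rewrite monomial_gapS => g0 m0 m1.
by rewrite -addrA addr_ge0 // addr_ge0 ?mulr_ge0 ?subr_ge0.
Qed.

(* A product of [0,1]-valued factors grows by at most the sum of the growths
   of its factors, and [x ^+ k] grows by at most [k] times the growth of [x]. *)
Lemma monomial_gap_antitone s t n :
    (forall j, 0 <= s j <= 1) -> (forall j, 0 <= t j <= 1) -> (forall j, s j <= t j) ->
  monomial_gap t n <= monomial_gap s n.
Proof.
move=> s01 t01 st; elim: n => [|n IH]; first by rewrite /monomial_gap /monomial !big_ord0.
have E u : monomial_gap u n.+1 =
    monomial u n * u n ^+ k n - 1 + \sum_(j < n) (k j)%:R * (1 - u j) + (k n)%:R * (1 - u n).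
  by rewrite /monomial_gap /monomial !big_ord_recr /=; ring.
rewrite !E; move: IH; rewrite /monomial_gap.
have := monomial_ge0 n s01; have := monomial_le1 n t01; have := le_monomial n s01 st.
case/andP: (s01 n) => s0 _; case/andP: (t01 n) => _ t1.
have := subrXX_le (k n) s0 (st n) t1.
have : s n ^+ k n <= t n ^+ k n by rewrite lerXn2r // nnegrE (le_trans s0).
have : t n ^+ k n <= 1 by rewrite exprn_ile1 // (le_trans s0).
have : 0 <= s n ^+ k n by rewrite exprn_ge0.
nra.
Qed.

(* The three summands of [monomial_gapS] vanish: for [k n > 0] the middle one
   forces [monomial s n = 1], the last one then [k n <= 1], and the linear part
   of [monomial_gap s n = 0] forces [k j = 0] for [j < n]. *)
Lemma monomial_gap_eq0 s n : (forall j, 0 <= s j < 1) ->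
  monomial_gap s n = 0 -> (\sum_(j < n) k j <= 1)%N.
Proof.
move=> s01; have s01' j : 0 <= s j <= 1 by case/andP: (s01 j) => -> /ltW.
elim: n => [|n IH]; first by rewrite big_ord0.
have m0 := monomial_ge0 n s01'; have m1 := monomial_le1 n s01'.
case/andP: (s01 n) => s0 s1; have g0 := bernoulli_gap_ge0 (k n) (s01' n).
have G0 := monomial_gap_ge0 n s01'.
have t2 : 0 <= (k n)%:R * (1 - s n) * (1 - monomial s n) by rewrite !mulr_ge0 ?subr_ge0 // ltW.
have t3 : 0 <= monomial s n * bernoulli_gap (s n) (k n) by rewrite mulr_ge0.
rewrite monomial_gapS big_ord_recr /= => H.
have Gn0 : monomial_gap s n = 0 by lra.
case kn : (k n) => [|kn']; first by rewrite addn0 IH.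
have m_eq1 : monomial s n = 1.
  have : (k n)%:R * (1 - s n) * (1 - monomial s n) = 0 by lra.
  by move/eqP; rewrite kn !mulf_eq0 pnatr_eq0 /= => /orP[] /eqP; lra.
have kn_le1 : (k n <= 1)%N.
  rewrite leqNgt; apply/negP => /(bernoulli_gap_gt0 (s01 n)).
  by rewrite lt_def => /andP[/eqP + _]; apply; move: t3 H; rewrite m_eq1 mul1r; lra.
have lin0 : \sum_(j < n) (k j)%:R * (1 - s j) = 0 by move: Gn0; rewrite /monomial_gap m_eq1; lra.
rewrite big1 ?add0n -?kn // => j _; move/eqP: lin0.
rewrite psumr_eq0 => [/allP /(_ j (mem_index_enum _)) /=|i _]; last first.
  by rewrite mulr_ge0 // subr_ge0; case/andP: (s01' i).
rewrite mulf_eq0 pnatr_eq0 subr_eq0 => /orP[/eqP //|/eqP sj1].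
by move: (s01 j); rewrite sj1 ltxx andbF.
Qed.

End monomial_gap.

Lemma sumn_Zcnt z : sumn z = (\sum_(j < size z) Zcnt z j)%N.
Proof. by rewrite sumnE (big_nth 0%N) big_mkord. Qed.

Lemma Zcnt_le_sumn z j : (Zcnt z j <= sumn z)%N.
Proof.
have [jz|zj] := ltnP j (size z); last by rewrite /Zcnt nth_default.
by rewrite sumn_Zcnt (bigD1 (Ordinal jz)) //= leq_addr.
Qed.

Section monomial_seq.
Variable R : realDomainType.
Implicit Types (z : seq nat) (s : nat -> R).

Lemma monomial_sumn1 z s : sumn z = 1%N ->
  monomial (Zcnt z) s (size z) = \sum_(j < size z) (Zcnt z j)%:R * s j.
Proof.
rewrite /monomial /Zcnt; elim: z s => [//|a z IH] s /=.
rewrite !big_ord_recl /=; case: a => [|[|//]] /=.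
  by rewrite add0n => /(IH (s \o succn)) ->; rewrite expr0 mul1r mul0r add0r.
rewrite add1n => -[z0]; have zj j : nth 0%N z j = 0%N.
  by have := Zcnt_le_sumn z j; rewrite z0 leqn0 => /eqP.
by rewrite !big1 ?mulr1 ?addr0 ?mul1r // => j _; rewrite zj ?expr0 ?mul0r.
Qed.

Lemma monomial_le_factor z s j : (forall j, 0 <= s j <= 1) ->
  (j < size z)%N -> (0 < Zcnt z j)%N -> monomial (Zcnt z) s (size z) <= s j.
Proof.
move=> s01 jz zj; rewrite /monomial (bigD1 (Ordinal jz)) //=.
have m0 : 0 <= \prod_(i < size z | i != Ordinal jz) s i ^+ Zcnt z i.
  by apply: prodr_ge0 => i _; rewrite exprn_ge0 //; case/andP: (s01 i).
have m1 : \prod_(i < size z | i != Ordinal jz) s i ^+ Zcnt z i <= 1.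
  by apply: prodr_ile1 => i _; case/andP: (s01 i) => ? ?; rewrite exprn_ge0 ?exprn_ile1.
case/andP: (s01 j) => s0 s1; have : s j ^+ Zcnt z j <= s j.
  by case: (Zcnt z j) zj => // m _; rewrite exprS ler_piMr ?exprn_ge0 ?exprn_ile1.
have : 0 <= s j ^+ Zcnt z j by rewrite exprn_ge0.
nra.
Qed.

End monomial_seq.

Section expectation.
Variables (R : realType) (p : nat -> seq nat -> R).
Hypothesis p0 : forall i z, (0 <= p i z)%R.
Hypothesis p1 : forall i, (\esum_(z in [set: seq nat]) (p i z)%:E = 1)%E.
Local Open Scope ereal_scope.
Implicit Types (f g : seq nat -> R) (i : nat).

Definition expect i f : \bar R := \esum_(z in [set: seq nat]) (p i z * f z)%:E.

Lemma expect_ge0 i f : (forall z, 0 <= f z)%R -> 0 <= expect i f.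
Proof. by move=> f0; apply: esum_ge0 => z _; rewrite lee_fin mulr_ge0. Qed.

Lemma le_expect i f g : (forall z, f z <= g z)%R -> expect i f <= expect i g.
Proof. by move=> fg; apply: le_esum => z _; rewrite lee_fin ler_wpM2l. Qed.

Lemma eq_expect i f g : (forall z, p i z * f z = p i z * g z)%R -> expect i f = expect i g.
Proof. by move=> fg; apply: eq_esum => z _; rewrite fg. Qed.

Lemma expectD i f g : (forall z, 0 <= f z)%R -> (forall z, 0 <= g z)%R ->
  expect i (fun z => f z + g z)%R = expect i f + expect i g.
Proof.
move=> f0 g0; rewrite /expect -esumD => [|z _|z _]; rewrite ?lee_fin ?mulr_ge0 //.
by apply: eq_esum => z _; rewrite mulrDr EFinD.
Qed.

Lemma expectZ i c f : (0 <= c)%R -> (forall z, 0 <= f z)%R ->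
  expect i (fun z => c * f z)%R = c%:E * expect i f.
Proof.
move=> c0 f0; rewrite /expect -esumZl // => [|z]; last by rewrite lee_fin mulr_ge0.
by apply: eq_esum => z _; rewrite -EFinM mulrCA.
Qed.

Lemma expect_cst i c : (0 <= c)%R -> expect i (fun=> c) = c%:E.
Proof.
move=> c0; rewrite /expect; under eq_esum do rewrite EFinM.
by rewrite esumZr ?p1 ?mul1e // => z; rewrite lee_fin.
Qed.

Lemma expect_le1 i f : (forall z, 0 <= f z <= 1)%R -> expect i f <= 1.
Proof.
move=> f01; rewrite -(expect_cst i ler01); apply: le_expect => z.
by case/andP: (f01 z).
Qed.

Lemma expect_fin i f : (forall z, 0 <= f z <= 1)%R -> expect i f = (fine (expect i f))%:E.
Proof.
move=> f01; rewrite fineK // ge0_fin_numE ?(le_lt_trans (expect_le1 i f01)) ?ltry //.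
by apply: expect_ge0 => z; case/andP: (f01 z).
Qed.

Lemma expect_compl i f : (forall z, 0 <= f z <= 1)%R ->
  expect i (fun z => 1 - f z)%R = (1 - fine (expect i f))%:E.
Proof.
move=> f01; have f0 z : (0 <= f z)%R by case/andP: (f01 z).
have f1 z : (0 <= 1 - f z)%R by case/andP: (f01 z); rewrite subr_ge0.
have : expect i f + expect i (fun z => 1 - f z)%R = 1.
  rewrite -expectD // -(expect_cst i ler01).
  by apply: eq_expect => z; rewrite addrC subrK.
have Ef := expect_fin i f01; set e := fine _ in Ef *.
by rewrite EFinB => <-; rewrite Ef addeAC subee ?add0e.
Qed.

Lemma expect_ge_term i f z : (forall z, 0 <= f z)%R -> (p i z * f z)%:E <= expect i f.
Proof.
by move=> f0; apply: esum_ge_term => y; rewrite lee_fin mulr_ge0.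
Qed.

Lemma esum_expect i (f : seq nat -> nat -> R) :
    (forall z j, 0 <= f z j)%R -> (forall z j, (size z <= j)%N -> f z j = 0%R) ->
  \esum_(j in [set: nat]) expect i (f^~ j) = expect i (fun z => \sum_(j < size z) f z j)%R.
Proof.
move=> f0 fz; rewrite /expect exchange_esum => [|j z]; last by rewrite lee_fin mulr_ge0.
apply: eq_esum => z _; rewrite (esum_ord (n := size z)) => [|j|j jz].
- by rewrite sumEFin mulr_sumr.
- by rewrite lee_fin mulr_ge0.
- by rewrite fz // mulr0.
Qed.

End expectation.

Definition sumn_above {R : realType} (K : nat) (z : seq nat) : R :=
  if (K < sumn z)%N then (sumn z)%:R else 0.

Lemma sumn_above_ge0 (R : realType) K z : 0 <= sumn_above K z :> R.
Proof. by rewrite /sumn_above; case: ifP. Qed.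

Definition sumn_tail {R : realType} (p : nat -> seq nat -> R) (K i : nat) : \bar R :=
  \esum_(z in [set z | (K < sumn z)%N]) (p i z * (sumn z)%:R)%:E.

Definition type_tail {R : realType} (p : nat -> seq nat -> R) (N i : nat) : \bar R :=
  \esum_(j in [set j | (N < j)%N]) Mij p i j.

Section offspring_means.
Variables (R : realType) (p : nat -> seq nat -> R).
Hypothesis p0 : forall i z, (0 <= p i z)%R.
Hypothesis p1 : forall i, (\esum_(z in [set: seq nat]) (p i z)%:E = 1)%E.
Local Open Scope ereal_scope.
Implicit Types (s : nat -> R) (i j : nat).

Lemma Mij_ge0 i j : 0 <= Mij p i j.
Proof. exact: (expect_ge0 p0). Qed.

Lemma Mi_ge0 i : 0 <= Mi p i.
Proof. exact: (expect_ge0 p0). Qed.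

Lemma Mn_ge0 n i j : 0 <= Mn p n i j.
Proof.
elim: n j => [|n IH] j /=; first by rewrite lee_fin.
by apply: esum_ge0 => k _; rewrite mule_ge0 ?Mij_ge0.
Qed.

Lemma monomial_in01 z s : unit_cube s -> (0 <= monomial (Zcnt z) s (size z) <= 1)%R.
Proof. by move=> s01; rewrite monomial_ge0 ?monomial_le1. Qed.

Lemma pgf_expect s i : unit_cube s ->
  (pgf p s i)%:E = expect p i (fun z => monomial (Zcnt z) s (size z)).
Proof. by move=> s01; rewrite -(expect_fin p0 p1) // => z; apply: monomial_in01. Qed.

Lemma pgf_in01 s i : unit_cube s -> (0 <= pgf p s i <= 1)%R.
Proof.
move=> s01; have m01 z := monomial_in01 z s01.
rewrite -!lee_fin pgf_expect // (expect_le1 p0 p1) // andbT.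
by apply: (expect_ge0 p0) => z; case/andP: (m01 z).
Qed.

Lemma le_pgf s t i : unit_cube s -> unit_cube t -> (forall j, s j <= t j)%R ->
  (pgf p s i <= pgf p t i)%R.
Proof.
move=> s01 t01 st; rewrite -lee_fin !pgf_expect //.
by apply: (le_expect p0) => z; apply: le_monomial.
Qed.

Lemma one_sub_pgf_expect s i : unit_cube s ->
  (1 - pgf p s i)%:E = expect p i (fun z => 1 - monomial (Zcnt z) s (size z))%R.
Proof. by move=> s01; rewrite (expect_compl p0 p1) // => z; apply: monomial_in01. Qed.

Lemma esum_Mij_mul i (a : nat -> R) : (forall j, 0 <= a j)%R ->
  \esum_(j in [set: nat]) (Mij p i j * (a j)%:E) =
  expect p i (fun z => \sum_(j < size z) (Zcnt z j)%:R * a j)%R.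
Proof.
move=> a0; rewrite -(esum_expect p0 i (f := fun z j => (Zcnt z j)%:R * a j)%R)
  => [|z j|z j jz]; last 2 first.
- by rewrite mulr_ge0.
- by rewrite /Zcnt nth_default // mul0r.
apply: eq_esum => j _; rewrite muleC -(expectZ p0) //.
by apply: eq_expect => z; rewrite (mulrC (a j)).
Qed.

Lemma Mi_esum i : Mi p i = \esum_(j in [set: nat]) Mij p i j.
Proof.
under eq_esum do rewrite -[Mij _ _ _]mule1.
rewrite esum_Mij_mul //; apply: eq_expect => z.
rewrite sumn_Zcnt natr_sum; congr (_ * _)%R.
by apply: eq_bigr => j _; rewrite mulr1.
Qed.

Lemma esum_Qij i s : unit_cube s ->
  \esum_(j in [set: nat]) (Qij p i j (s j))%:E =
  expect p i (fun z => \sum_(j < size z) (1 - s j ^+ Zcnt z j))%R.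
Proof.
move=> s01; rewrite -(esum_expect p0 i (f := fun z j => 1 - s j ^+ Zcnt z j)%R)
  => [|z j|z j jz]; last 2 first.
- by case/andP: (s01 j) => ? ?; rewrite subr_ge0 exprn_ile1.
- by rewrite /Zcnt nth_default // expr0 subrr.
apply: eq_esum => j _; rewrite (expect_compl p0 p1) // => z.
by case/andP: (s01 j) => ? ?; rewrite exprn_ge0 ?exprn_ile1.
Qed.

Lemma expect_tail i K :
  expect p i (sumn_above K) = sumn_tail p K i.
Proof.
rewrite /expect /sumn_tail [RHS]esum_mkcond; apply: eq_esum => z _; rewrite /sumn_above.
case: ifP => Kz; first by rewrite mem_set.
by rewrite memNset ?mulr0 //= Kz.
Qed.

Lemma pgf_linear_of_sumn_eq1 : (forall i z, (0 < p i z)%R -> sumn z = 1%N) -> pgf_linear p.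
Proof.
move=> sumn1 i s s01; rewrite esum_Mij_mul => [|j]; last by case/andP: (s01 j).
rewrite /pgf; congr fine; apply: eq_expect => z.
have [pz0|pz_gt0] := eqVneq (p i z) 0%R; first by rewrite pz0 !mul0r.
by rewrite -/(monomial (Zcnt z) s (size z)) monomial_sumn1 // (sumn1 i) // lt_def pz_gt0 p0.
Qed.

End offspring_means.

Section first_order_error.
Variables (R : realType) (p : nat -> seq nat -> R).
Hypothesis p0 : forall i z, (0 <= p i z)%R.
Hypothesis p1 : forall i, (\esum_(z in [set: seq nat]) (p i z)%:E = 1)%E.
Hypothesis Mi_fin : forall i, (Mi p i < +oo)%E.
Hypothesis sumn_tail_small : forall e : R, 0 < e -> exists K0 : nat,
  forall K, (K0 <= K)%N -> forall i, (sumn_tail p K i <= e%:E * Mi p i)%E.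
Implicit Types (s : nat -> R) (z : seq nat).

Definition coord_gap s z : R := \sum_(j < size z) bernoulli_gap (s j) (Zcnt z j).

Lemma coord_gap_ge0 s z : unit_cube s -> 0 <= coord_gap s z.
Proof. by move=> s01; apply: sumr_ge0 => j _; apply: bernoulli_gap_ge0. Qed.

Lemma eps2E s i : unit_cube s ->
  eps2 p s i = fine (expect p i (coord_gap s)) / fine (Mi p i).
Proof.
move=> s01; have G0 z := coord_gap_ge0 z s01.
pose lin z := \sum_(j < size z) (Zcnt z j)%:R * (1 - s j).
pose qsum z := \sum_(j < size z) (1 - s j ^+ Zcnt z j).
have q0 z : 0 <= qsum z.
  by apply: sumr_ge0 => j _; case/andP: (s01 j) => ? ?; rewrite subr_ge0 exprn_ile1.
have lin_split : expect p i lin = (expect p i qsum + expect p i (coord_gap s))%E.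
  rewrite -expectD //; apply: eq_expect => z; congr (_ * _).
  rewrite /lin (eq_bigr (fun j : 'I_(size z) => (1 - s j ^+ Zcnt z j) +
    bernoulli_gap (s j) (Zcnt z j))) => [|j _]; last by rewrite /bernoulli_gap; ring.
  by rewrite big_split.
have lin_fin : (expect p i lin < +oo)%E.
  apply: le_lt_trans (Mi_fin i); apply: le_expect => // z.
  rewrite sumn_Zcnt natr_sum ler_sum // => j _.
  by case/andP: (s01 j) => ? ?; rewrite ler_piMr // lerBlDr lerDl.
have Eq0 : (0 <= expect p i qsum)%E by apply: expect_ge0.
have EG0 : (0 <= expect p i (coord_gap s))%E by apply: expect_ge0.
have q_fin : expect p i qsum \is a fin_num.
  by rewrite ge0_fin_numE // (le_lt_trans _ lin_fin) // lin_split leeDl.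
have G_fin : expect p i (coord_gap s) \is a fin_num.
  by rewrite ge0_fin_numE // (le_lt_trans _ lin_fin) // lin_split leeDr.
rewrite /eps2 (esum_Mij_mul p0) => [|j]; last by case/andP: (s01 j); rewrite subr_ge0.
by rewrite (esum_Qij p0 p1) // lin_split fineD // addrAC subrr add0r.
Qed.

Lemma defect_bound_ge0 s (dl : R) : unit_cube s -> (forall j, 1 - s j <= dl) -> 0 <= dl.
Proof.
by move=> s01 sdl; case/andP: (s01 0%N) => _ s1; rewrite (le_trans _ (sdl 0%N)) ?subr_ge0.
Qed.

Lemma coord_gap_le s z (dl : R) (K : nat) : unit_cube s -> (forall j, 1 - s j <= dl) ->
  coord_gap s z <=
    dl ^+ 2 * K%:R * (sumn z)%:R + dl * sumn_above K z.
Proof.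
move=> s01 sdl; have dl0 := defect_bound_ge0 s01 sdl.
have d01 j : 0 <= 1 - s j <= dl by rewrite sdl andbT subr_ge0; case/andP: (s01 j).
have lin : coord_gap s z <= dl * (sumn z)%:R.
  rewrite sumn_Zcnt natr_sum mulr_sumr ler_sum // => j _.
  apply: le_trans (bernoulli_gap_le_lin _ (s01 j)) _.
  by rewrite mulrC ler_wpM2r //; case/andP: (d01 j).
have sqr : coord_gap s z <= dl ^+ 2 * (sumn z)%:R * (sumn z)%:R.
  rewrite {2}sumn_Zcnt natr_sum mulr_sumr ler_sum // => j _.
  apply: le_trans (bernoulli_gap_le_sqr _ (s01 j)) _.
  have Zs : (Zcnt z j)%:R <= (sumn z)%:R :> R by rewrite ler_nat Zcnt_le_sumn.
  apply: le_trans (_ : (Zcnt z j)%:R ^+ 2 * dl ^+ 2 <= _).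
    by apply: ler_wpM2l; [exact: exprn_ge0 | rewrite ler_sqr ?nnegrE //; case/andP: (d01 j)].
  rewrite mulrC -mulrA; apply: ler_wpM2l; first exact: exprn_ge0.
  by rewrite expr2; apply: ler_wpM2r.
rewrite /sumn_above; case: ifP => Kz.
  by rewrite (le_trans lin) // lerDr !mulr_ge0 ?exprn_ge0.
rewrite mulr0 addr0 (le_trans sqr) // ler_wpM2r //; apply: ler_wpM2l; rewrite ?exprn_ge0 //.
by rewrite ler_nat leqNgt Kz.
Qed.

Lemma expect_coord_gap_le s i (dl c : R) (K : nat) :
    unit_cube s -> (forall j, 1 - s j <= dl) -> 0 <= c ->
    (sumn_tail p K i <= c%:E * Mi p i)%E ->
  (expect p i (coord_gap s) <= (dl ^+ 2 * K%:R + dl * c)%:E * Mi p i)%E.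
Proof.
move=> s01 sdl c0 tail.
have dl0 := defect_bound_ge0 s01 sdl.
have tl0 z : 0 <= sumn_above K z :> R := sumn_above_ge0 R K z.
apply: (@le_trans _ _ (expect p i (fun z => dl ^+ 2 * K%:R * (sumn z)%:R + dl * sumn_above K z))).
  by apply: le_expect => // z; apply: coord_gap_le.
rewrite (expectD p0) => [|z|z]; rewrite ?mulr_ge0 ?exprn_ge0 //.
rewrite (expectZ p0) ?mulr_ge0 ?exprn_ge0 // (expectZ p0 i dl0) // expect_tail.
rewrite EFinD ge0_muleDl ?lee_fin ?mulr_ge0 ?exprn_ge0 // leeD2l // EFinM -muleA.
by rewrite lee_wpmul2l ?lee_fin.
Qed.

Lemma eps2_le s i (dl c : R) (K : nat) :
    unit_cube s -> (forall j, 1 - s j <= dl) -> 0 <= c ->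
    (sumn_tail p K i <= c%:E * Mi p i)%E ->
  `|eps2 p s i| <= dl ^+ 2 * K%:R + dl * c.
Proof.
move=> s01 sdl c0 tail; have Gz0 z := coord_gap_ge0 z s01.
have EG_le := expect_coord_gap_le s01 sdl c0 tail.
have EG0 : (0 <= expect p i (coord_gap s))%E by apply: expect_ge0.
have Mfin : Mi p i \is a fin_num by rewrite ge0_fin_numE ?Mi_ge0.
have EG_fin : expect p i (coord_gap s) \is a fin_num.
  by rewrite ge0_fin_numE // (le_lt_trans EG_le) // -(fineK Mfin) -EFinM ltry.
have {}EG_le : fine (expect p i (coord_gap s)) <= (dl ^+ 2 * K%:R + dl * c) * fine (Mi p i).
  by rewrite -lee_fin EFinM !fineK.
have M0 : 0 <= fine (Mi p i) by rewrite fine_ge0 ?Mi_ge0.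
rewrite eps2E //; move: EG_le M0 (fine_ge0 EG0).
set G := fine _; set M := fine _ => EG_le M0 G0.
(* For [M_i = 0], [eps2] is [0] by the convention [x / 0 = 0]. *)
have [->|Mn0] := eqVneq M 0.
  by rewrite invr0 mulr0 normr0 addr_ge0 ?mulr_ge0 ?exprn_ge0 // (defect_bound_ge0 s01 sdl).
by rewrite ger0_norm ?divr_ge0 // ler_pdivrMr // lt_def Mn0.
Qed.

Lemma eps2_small (e : R) : 0 < e -> exists2 d : R, 0 < d &
  forall s (dl : R), unit_cube s -> (forall j, 1 - s j <= dl) -> dl < d ->
  forall i, `|eps2 p s i| <= e * dl.
Proof.
move=> e0; have e20 : 0 < e / 2 by rewrite divr_gt0.
have [K /(_ K (leqnn K)) tailK] := sumn_tail_small e20.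
have K1 : 0 < K%:R + 1 :> R by rewrite ltr_wpDl.
exists (e / (2 * (K%:R + 1))); first by rewrite divr_gt0 ?mulr_gt0.
move=> s dl s01 sdl dl_lt i; have dl0 := defect_bound_ge0 s01 sdl.
apply: le_trans (eps2_le s01 sdl (ltW e20) (tailK i)) _.
have dlK : dl * (K%:R + 1) <= e / 2.
  by rewrite -ler_pdivlMr // ltW // (lt_le_trans dl_lt) // invfM mulrA.
have : dl * (dl * K%:R) <= dl * (e / 2) by apply: ler_wpM2l => //; nra.
by rewrite expr2; nra.
Qed.

End first_order_error.

Lemma cst0_cube {R : realType} : unit_cube (cst 0 : nat -> R).
Proof. by move=> j; rewrite lexx ler01. Qed.

Section iterates.
Variables (R : realType) (p : nat -> seq nat -> R).
Hypothesis p0 : forall i z, (0 <= p i z)%R.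
Hypothesis p1 : forall i, (\esum_(z in [set: seq nat]) (p i z)%:E = 1)%E.
Local Open Scope ereal_scope.
Implicit Types (s t : nat -> R) (i j : nat).

Lemma pgfn_cube n s : unit_cube s -> unit_cube (pgfn p n s).
Proof. by move=> s01; elim: n => [|n IH] //= j; apply: pgf_in01. Qed.

Lemma le_pgfn n s t : unit_cube s -> unit_cube t -> (forall j, s j <= t j)%R ->
  forall j, (pgfn p n s j <= pgfn p n t j)%R.
Proof.
move=> s01 t01 st; elim: n => [|n IH] j /=; first exact: st.
by apply: (le_pgf p0 p1) => //; apply: pgfn_cube.
Qed.

Lemma pgfn0_nondecreasing j :
  {homo (fun n => pgfn p n (cst 0%R) j) : m n / (m <= n)%N >-> (m <= n)%R}.
Proof.
apply: (homo_leq le_refl le_trans) => n.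
elim: n j => [|n IH] j; first by case/andP: (pgf_in01 p0 p1 j cst0_cube).
by apply: (le_pgf p0 p1) => //;
  [exact: (pgfn_cube n cst0_cube) | exact: (pgfn_cube n.+1 cst0_cube)].
Qed.

Definition pgf_remainder i s : \bar R :=
  expect p i (fun z => monomial_gap (Zcnt z) s (size z)).

Lemma pgf_remainder_ge0 i s : unit_cube s -> 0 <= pgf_remainder i s.
Proof. by move=> s01; apply: (expect_ge0 p0) => z; apply: monomial_gap_ge0. Qed.

Lemma pgf_linearization i s : unit_cube s ->
  (1 - pgf p s i)%:E + pgf_remainder i s =
  \esum_(j in [set: nat]) (Mij p i j * (1 - s j)%:E).
Proof.
move=> s01; rewrite (esum_Mij_mul p0) => [|j]; last by case/andP: (s01 j); rewrite subr_ge0.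
rewrite (one_sub_pgf_expect p0 p1) // /pgf_remainder -(expectD p0) => [|z|z].
- by apply: eq_expect => z; congr (_ * _)%R; rewrite /monomial_gap; ring.
- by case/andP: (monomial_in01 z s01) => _; rewrite subr_ge0.
- exact: monomial_gap_ge0.
Qed.

Lemma one_sub_pgf_le i s : unit_cube s ->
  (1 - pgf p s i)%:E <= \esum_(j in [set: nat]) (Mij p i j * (1 - s j)%:E).
Proof. by move=> s01; rewrite -pgf_linearization // leeDl // pgf_remainder_ge0. Qed.

End iterates.

(* [pgfn p n (cst 0) j] is the probability that the progeny of one type-[j]
   particle is extinct at generation [n]. *)
Definition certain_extinction (R : realType) (p : nat -> seq nat -> R) : Prop :=
  forall j (eta : R), 0 < eta -> exists n, 1 - pgfn p n (cst 0) j <= eta.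

Section uniform_extinction.
Variables (R : realType) (p : nat -> seq nat -> R).
Hypothesis p0 : forall i z, (0 <= p i z)%R.
Hypothesis p1 : forall i, (\esum_(z in [set: seq nat]) (p i z)%:E = 1)%E.
Hypothesis Mi_fin : forall i, (Mi p i < +oo)%E.
Hypothesis sumn_tail_small : forall e : R, 0 < e -> exists K0 : nat,
  forall K, (K0 <= K)%N -> forall i, (sumn_tail p K i <= e%:E * Mi p i)%E.
Hypothesis type_tail_small : forall e : R, 0 < e -> exists N0 : nat,
  forall N, (N0 <= N)%N -> forall i, (type_tail p N i <= e%:E * Mi p i)%E.
Local Open Scope ereal_scope.

Lemma Mi_bounded : exists2 B : R, (0 <= B)%R & forall i, Mi p i <= B%:E.
Proof.
have half0 : (0 < 2^-1 :> R)%R by rewrite invr_gt0.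
have [K /(_ K (leqnn K)) tailK] := sumn_tail_small half0.
exists (2 * K%:R)%R => [|i]; first by rewrite mulr_ge0.
have Mfin : Mi p i \is a fin_num by rewrite ge0_fin_numE ?Mi_ge0.
have : Mi p i <= K%:R%:E + 2^-1%:E * Mi p i.
  apply: (@le_trans _ _ (expect p i (fun z => K%:R + sumn_above K z)%R)).
    apply: (le_expect p0) => z; rewrite /sumn_above.
    by case: ifPn; rewrite ?addr0 ?lerDr // ler_nat -leqNgt.
  rewrite (expectD p0) => [|//|z]; last exact: sumn_above_ge0.
  by rewrite (expect_cst p0 p1) // expect_tail leeD2l.
rewrite -(fineK Mfin) -EFinM -EFinD !lee_fin; lra.
Qed.

Lemma esum_Mij_mul_le i (a : nat -> R) (eta e : R) (N : nat) :
    (0 <= eta)%R -> (0 <= e)%R -> (forall j, 0 <= a j <= 1)%R ->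
    (forall j, (j <= N)%N -> a j <= eta)%R ->
    type_tail p N i <= e%:E * Mi p i ->
  \esum_(j in [set: nat]) (Mij p i j * (a j)%:E) <= (eta + e)%:E * Mi p i.
Proof.
move=> eta0 e0 a01 a_eta tailN; have M0 j := Mij_ge0 p0 i j.
pose far j := if j \in [set j | (N < j)%N] then Mij p i j else 0.
apply: (@le_trans _ _ (\esum_(j in [set: nat]) (Mij p i j * eta%:E + far j))).
  apply: le_esum => j _; rewrite /far; case: (boolP (j \in _)) => [_|].
    apply: (@le_trans _ _ (Mij p i j)); last by apply: leeDr; rewrite mule_ge0 ?lee_fin.
    by rewrite -[leRHS]mule1 lee_wpmul2l ?lee_fin //; case/andP: (a01 j).
  rewrite notin_setE /= => /negP; rewrite -leqNgt adde0 => jN.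
  by rewrite lee_wpmul2l // lee_fin a_eta.
rewrite esumD => [|j _|j _]; last 2 first.
- by rewrite mule_ge0 ?lee_fin.
- by rewrite /far; case: ifP.
rewrite -esum_mkcond esumZr // -(Mi_esum p0) EFinD ge0_muleDl ?lee_fin //.
by rewrite muleC leeD2l.
Qed.

Lemma extinction_finite_types : certain_extinction p ->
  forall (m : nat) (eta : R), (0 < eta)%R -> exists n0, forall n, (n0 <= n)%N ->
  forall j, (j < m)%N -> (1 - pgfn p n (cst 0%R) j <= eta)%R.
Proof.
move=> ext m eta eta0; elim: m => [|m [n0 IH]]; first by exists 0%N.
have [n1 Hn1] := ext m eta eta0.
exists (maxn n0 n1) => n; rewrite geq_max => /andP[n0n n1n] j.
rewrite ltnS leq_eqVlt => /orP[/eqP ->|jm]; last exact: IH.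
by rewrite (le_trans _ Hn1) // lerD2l lerN2 (pgfn0_nondecreasing p0 p1).
Qed.

Lemma extinction_uniform : certain_extinction p ->
  forall eta : R, (0 < eta)%R -> exists N, forall n, (N <= n)%N ->
  forall s, unit_cube s -> forall i, (1 - pgfn p n s i <= eta)%R.
Proof.
move=> ext eta eta0; have [B B0 MB] := Mi_bounded.
have B1 : (0 < B + 1)%R by rewrite ltr_wpDl.
pose e := (eta / (2 * (B + 1)))%R.
have e0 : (0 < e)%R by rewrite divr_gt0 ?mulr_gt0.
have [N /(_ N (leqnn N)) tailN] := type_tail_small e0.
have [n0 near_types] := extinction_finite_types ext N.+1 e0.
exists n0.+1 => -[//|n] n_ge s s01 i /=.
have t01 := pgfn_cube p0 p1 n s01.
have near j : (j <= N)%N -> (1 - pgfn p n s j <= e)%R.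
  move=> jN; apply: le_trans (near_types n n_ge j jN).
  rewrite lerD2l lerN2; apply: (le_pgfn p0 p1) => // [|k]; first exact: cst0_cube.
  by case/andP: (s01 k).
have t_in01 j : (0 <= 1 - pgfn p n s j <= 1)%R.
  by case/andP: (t01 j) => ? ?; apply/andP; split; lra.
have le_eB : (e + e)%:E * Mi p i <= (e + e)%:E * B%:E.
  apply: lee_wpmul2l; [by rewrite lee_fin addr_ge0 ?ltW | exact: MB].
have := le_trans (one_sub_pgf_le p0 p1 i t01)
  (le_trans (esum_Mij_mul_le (ltW e0) (ltW e0) t_in01 near (tailN i)) le_eB).
rewrite -EFinM lee_fin => /le_trans; apply.
have -> : ((e + e) * B = eta * (B / (B + 1)))%R by rewrite /e; field; rewrite gt_eqF.
by rewrite ler_piMr ?ltW //; rewrite ltr_pdivrMr // mul1r ltrDl.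
Qed.

End uniform_extinction.

Section survival.
Variables (R : realType) (p : nat -> seq nat -> R).
Hypothesis p0 : forall i z, (0 <= p i z)%R.
Hypothesis p1 : forall i, (\esum_(z in [set: seq nat]) (p i z)%:E = 1)%E.
Implicit Types (i j k : nat).

Definition survival j : R := inf [set 1 - pgfn p n (cst 0) j | n in [set: nat]].

Lemma survival_le n j : survival j <= 1 - pgfn p n (cst 0) j.
Proof.
apply: ge_inf; last by exists n.
exists 0 => _ [m _ <-]; case/andP: (pgfn_cube p0 p1 m cst0_cube j) => _.
by rewrite subr_ge0.
Qed.

Lemma survival_ge j c : (forall n, c <= 1 - pgfn p n (cst 0) j) -> c <= survival j.
Proof.
by move=> c_le; apply: lb_le_inf => [|_ [n _ <-]]; [exists (1 - pgfn p 0 (cst 0) j), 0%N|].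
Qed.

Lemma survival_in01 j : 0 <= survival j <= 1.
Proof.
rewrite survival_ge => [|n]; last first.
  by case/andP: (pgfn_cube p0 p1 n cst0_cube j) => _; rewrite subr_ge0.
by rewrite (le_trans (survival_le 0 j)) //= lerBlDr lerDl.
Qed.

(* If a type-[k] particle can have a type-[j] child, type [k] survives at
   least with the probability of that offspring vector times [survival j]. *)
Lemma survival_gt0_Mij k j : (0 < Mij p k j)%E -> 0 < survival j -> 0 < survival k.
Proof.
move=> Mkj qj.
have [z _] : exists2 z, [set: seq nat] z & (0 < (p k z * (Zcnt z j)%:R)%:E)%E.
  by apply: esum_gt0_ex Mkj => z; rewrite lee_fin mulr_ge0.
rewrite lte_fin => pz_gt0; have pz0 : 0 < p k z.
  by rewrite lt_def p0 andbT; apply: contraTneq pz_gt0 => ->; rewrite mul0r ltxx.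
have zj : (0 < Zcnt z j)%N.
  by rewrite lt0n; apply: contraTneq pz_gt0 => ->; rewrite mulr0 ltxx.
have jz : (j < size z)%N.
  by rewrite ltnNge; apply: contraTN zj => /(nth_default 0%N); rewrite /Zcnt => ->.
have pz1 : p k z <= 1.
  by have := expect_ge_term p0 k z (fun=> ler01); rewrite (expect_cst p0 p1) // mulr1 lee_fin.
apply: lt_le_trans (mulr_gt0 pz0 qj) (survival_ge _) => -[|n].
  by case/andP: (survival_in01 j) => q0 q1; rewrite /cst /= subr0 mulr_ile1 // ltW.
have t01 := pgfn_cube p0 p1 n (@cst0_cube R).
rewrite -lee_fin /= (one_sub_pgf_expect p0 p1) //.
apply: le_trans (expect_ge_term p0 k z _) => [|y]; last first.
  by case/andP: (monomial_in01 y t01) => _; rewrite subr_ge0.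
rewrite lee_fin ler_wpM2l // (le_trans (survival_le n j)) // lerD2l lerN2.
exact: monomial_le_factor.
Qed.

Lemma survival_gt0_Mn n i j : (0 < Mn p n i j)%E -> 0 < survival j -> 0 < survival i.
Proof.
elim: n j => [|n IH] j /=; first by case: eqP => [->//|_]; rewrite ltxx.
move=> Mij_gt0 qj.
have [k _ Mk_gt0] : exists2 k, [set: nat] k & (0 < Mn p n i k * Mij p k j)%E.
  by apply: esum_gt0_ex Mij_gt0 => k; rewrite mule_ge0 ?Mn_ge0 ?Mij_ge0.
apply: (IH k); last apply: survival_gt0_Mij qj.
- by rewrite lt_def Mn_ge0 // andbT; apply: contraTneq Mk_gt0 => ->; rewrite mul0e ltxx.
- by rewrite lt_def Mij_ge0 // andbT; apply: contraTneq Mk_gt0 => ->; rewrite mule0 ltxx.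
Qed.

End survival.

Lemma ereal_nat_mul_bounded_eq0 (R : realType) (X : \bar R) (c : R) :
  (0 <= X)%E -> (forall N : nat, (N%:R%:E * X <= c%:E)%E) -> X = 0%E.
Proof.
case: X => [x| |] // x0 bounded; last by have := bounded 1%N; rewrite mul1e leye_eq.
rewrite lee_fin in x0; congr _%:E; apply/eqP; rewrite eq_le x0 andbT leNgt.
apply/negP => x_gt0; have := bounded (Num.truncn (c / x)).+1.
by rewrite -EFinM lee_fin -ler_pdivlMr // leNgt truncnS_gt.
Qed.

Section lyapunov.
Variables (R : realType) (p : nat -> seq nat -> R).
Hypothesis p0 : forall i z, (0 <= p i z)%R.
Hypothesis p1 : forall i, (\esum_(z in [set: seq nat]) (p i z)%:E = 1)%E.
Variable v : nat -> R.
Hypothesis v_gt0 : forall j, (0 < v j)%R.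
Hypothesis v_left_eigen :
  forall j, (\esum_(i in [set: nat]) ((v i)%:E * Mij p i j) = (v j)%:E)%E.
Hypothesis v_sum1 : (\esum_(j in [set: nat]) (v j)%:E = 1)%E.
Local Open Scope ereal_scope.
Implicit Types (s : nat -> R).

Let v_ge0 i : 0 <= (v i)%:E. Proof. by rewrite lee_fin ltW. Qed.

Definition lyapunov s : \bar R := \esum_(i in [set: nat]) ((v i)%:E * (1 - s i)%:E).

Lemma lyapunov_ge0 s : unit_cube s -> 0 <= lyapunov s.
Proof.
move=> s01; apply: esum_ge0 => i _; rewrite mule_ge0 // lee_fin subr_ge0.
by case/andP: (s01 i).
Qed.

Lemma lyapunov_cst0 : lyapunov (cst 0%R) = 1.
Proof. by rewrite -v_sum1; apply: eq_esum => i _; rewrite /= subr0 mule1. Qed.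

(* [v M = v] turns the linear part of [pgf_linearization] into [lyapunov s]. *)
Lemma lyapunov_pgf s : unit_cube s ->
  lyapunov (pgf p s) + \esum_(i in [set: nat]) ((v i)%:E * pgf_remainder p i s) = lyapunov s.
Proof.
move=> s01; have a0 j : (0 <= 1 - s j)%R by case/andP: (s01 j); rewrite subr_ge0.
have b0 i : (0 <= 1 - pgf p s i)%R by case/andP: (pgf_in01 p0 p1 i s01); rewrite subr_ge0.
have M0 i j : 0 <= Mij p i j * (1 - s j)%:E by rewrite mule_ge0 ?(Mij_ge0 p0) ?lee_fin.
have R0 i := pgf_remainder_ge0 p0 i s01.
rewrite /lyapunov -esumD => [|i _|i _]; last 2 first.
- by rewrite mule_ge0 ?v_ge0 ?lee_fin.
- by rewrite mule_ge0 ?v_ge0.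
transitivity (\esum_(i in [set: nat]) \esum_(j in [set: nat])
  ((v i)%:E * (Mij p i j * (1 - s j)%:E))).
  apply: eq_esum => i _; rewrite -ge0_muleDr ?lee_fin //.
  by rewrite (pgf_linearization p0 p1) // esumZl ?ltW.
rewrite exchange_esum => [|i j]; last by rewrite mule_ge0 ?v_ge0.
apply: eq_esum => j _; under eq_esum do rewrite muleA.
rewrite esumZr ?a0 // => [|i]; first by rewrite v_left_eigen.
by rewrite mule_ge0 ?v_ge0 ?(Mij_ge0 p0).
Qed.

Lemma survival_cube : unit_cube (fun j => 1 - survival p j)%R.
Proof. by move=> j; case/andP: (survival_in01 p0 p1 j) => ? ?; apply/andP; split; lra. Qed.

(* Along [pgfn p n (cst 0)], which stays below [1 - survival p], every step
   lowers [lyapunov] by at least this nonnegative sum, and [lyapunov] starts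
   at [1]; hence the sum vanishes. *)
Lemma remainder_at_survival_eq0 :
  \esum_(i in [set: nat]) ((v i)%:E * pgf_remainder p i (fun j => 1 - survival p j)%R) = 0.
Proof.
set X := \esum_(i in _) _; pose t n := pgfn p n (cst 0%R).
have t01 n : unit_cube (t n) := pgfn_cube p0 p1 n cst0_cube.
have X0 : 0 <= X.
  by apply: esum_ge0 => i _; rewrite mule_ge0 ?v_ge0 // (pgf_remainder_ge0 p0 _ survival_cube).
have X_le n : X <= \esum_(i in [set: nat]) ((v i)%:E * pgf_remainder p i (t n)).
  apply: le_esum => i _; rewrite lee_wpmul2l ?v_ge0 //; apply: (le_expect p0) => z.
  apply: monomial_gap_antitone => [|j|j]; [exact: t01 | exact: survival_cube |].
  by rewrite lerBrDl -lerBrDr (survival_le p0 p1).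
have bound N : lyapunov (t N) + N%:R%:E * X <= 1.
  elim: N => [|N IH]; first by rewrite mul0e adde0 lyapunov_cst0.
  apply: le_trans IH; rewrite -(lyapunov_pgf (t01 N)) -natr1 EFinD ge0_muleDl ?lee_fin //.
  by rewrite mul1e addeA addeAC; apply: leeD => //; apply: leeD.
apply: (ereal_nat_mul_bounded_eq0 (c := 1%R) X0) => N.
by apply: le_trans (bound N); rewrite leeDr ?lyapunov_ge0.
Qed.

Lemma monomial_gap_at_survival_eq0 i z : (0 < p i z)%R ->
  monomial_gap (Zcnt z) (fun j => 1 - survival p j)%R (size z) = 0%R.
Proof.
move=> pz_gt0; set g := monomial_gap _ _ _.
have g0 : (0 <= g)%R by apply: monomial_gap_ge0; exact: survival_cube.
have R0 j : 0 <= (v j)%:E * pgf_remainder p j (fun j => 1 - survival p j)%R.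
  by rewrite mule_ge0 ?v_ge0 // (pgf_remainder_ge0 p0 _ survival_cube).
have := esum_ge_term i R0; rewrite remainder_at_survival_eq0 pmule_rle0 ?lte_fin //.
move/(le_trans (expect_ge_term p0 i z _)) => /(_ _) le0.
apply/eqP; rewrite eq_le g0 andbT -(pmulr_rle0 _ pz_gt0) -lee_fin le0 // => y.
by apply: monomial_gap_ge0; exact: survival_cube.
Qed.

Lemma sumn_le1_of_survival_gt0 : (forall j, 0 < survival p j)%R ->
  forall i z, (0 < p i z)%R -> (sumn z <= 1)%N.
Proof.
move=> q_gt0 i z /monomial_gap_at_survival_eq0 /monomial_gap_eq0.
rewrite sumn_Zcnt; apply => j.
by move: (q_gt0 j) (survival_in01 p0 p1 j) => qj /andP[_ q1]; apply/andP; split; lra.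
Qed.

Lemma esum_v_Mi : \esum_(i in [set: nat]) ((v i)%:E * Mi p i) = 1.
Proof.
rewrite -v_sum1 -[RHS](eq_esum (fun j _ => v_left_eigen j)).
rewrite -exchange_esum => [|i j]; last by rewrite mule_ge0 ?v_ge0 ?(Mij_ge0 p0).
by apply: eq_esum => i _; rewrite (Mi_esum p0) esumZl ?ltW // => j; apply: Mij_ge0.
Qed.

(* [v M = v] gives [\sum_i v_i M_i = 1 = \sum_i v_i], while [M_i] plus the
   probability of having no child is [1] here: so no particle is childless. *)
Lemma sumn_eq1_of_le1 : (forall i z, (0 < p i z)%R -> (sumn z <= 1)%N) ->
  forall i z, (0 < p i z)%R -> sumn z = 1%N.
Proof.
move=> le1; pose r i := expect p i (fun z => (sumn z == 0%N)%:R)%R.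
have r0 i : 0 <= r i by apply: (expect_ge0 p0).
have Mr i : Mi p i + r i = 1.
  rewrite -(expectD p0) // -(expect_cst p0 p1 i ler01); apply: eq_expect => z.
  have [->|pz_gt0] := eqVneq (p i z) 0%R; first by rewrite !mul0r.
  have := le1 i z; rewrite lt_def pz_gt0 p0 => /(_ isT).
  by case: (sumn z) => [|[|]] // _; rewrite /= ?add0r ?addr0.
have vr0 : \esum_(i in [set: nat]) ((v i)%:E * r i) = 0.
  have : \esum_(i in [set: nat]) ((v i)%:E * Mi p i) +
         \esum_(i in [set: nat]) ((v i)%:E * r i) = 1.
    rewrite -esumD => [|i _|i _]; rewrite ?mule_ge0 ?v_ge0 ?(Mi_ge0 p0) //.
    by rewrite -v_sum1; apply: eq_esum => i _; rewrite -ge0_muleDr ?(Mi_ge0 p0) // Mr mule1.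
  rewrite esum_v_Mi; have : 0 <= \esum_(i in [set: nat]) ((v i)%:E * r i).
    by apply: esum_ge0 => i _; rewrite mule_ge0 ?v_ge0.
  case: (\esum_(i in _) _) => [x| |] //= x0 /eqP.
  by rewrite -EFinD eqe => /eqP h; congr _%:E; lra.
move=> i z pz_gt0; have := le1 i z pz_gt0.
rewrite leq_eqVlt ltnS leqn0 => /orP[/eqP //|/eqP z0].
have vr_ge0 j : 0 <= (v j)%:E * r j by rewrite mule_ge0 ?v_ge0.
have := esum_ge_term i vr_ge0; rewrite vr0 pmule_rle0 ?lte_fin //.
move/(le_trans (expect_ge_term p0 i z (fun y => ler0n _ _))).
by rewrite z0 mulr1 lee_fin leNgt pz_gt0.
Qed.

Theorem certain_extinction_of_nonlinear :
  irreducible p -> ~ pgf_linear p -> certain_extinction p.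
Proof.
move=> irr nonlin j eta eta0; apply: contrapT => never.
have qj : (0 < survival p j)%R.
  apply: (lt_le_trans eta0); apply: survival_ge => n.
  rewrite leNgt; apply/negP => lt_eta.
  by apply: never; exists n; apply: ltW.
have q_gt0 i : (0 < survival p i)%R.
  by have [n [_ Mn_gt0]] := irr i j; apply: survival_gt0_Mn Mn_gt0 qj.
apply/nonlin/(pgf_linear_of_sumn_eq1 p0)/sumn_eq1_of_le1.
exact: sumn_le1_of_survival_gt0.
Qed.

End lyapunov.

Section sup_range.
Variable R : realType.
Implicit Types (f : nat -> R) (b : R).

Lemma le_sup_range f b j : (forall i, f i <= b) -> f j <= sup [set f i | i in [set: nat]].
Proof. by move=> fb; apply: ub_le_sup; [exists b => _ [i _ <-]|exists j]. Qed.

Lemma sup_range_le f b : (forall i, f i <= b) -> sup [set f i | i in [set: nat]] <= b.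
Proof. by move=> fb; apply: ge_sup => [|_ [i _ <-]]; [exists (f 0%N), 0%N|]. Qed.

End sup_range.

Theorem lemma7 (R : realType) (p : nat -> seq nat -> R) :
  offspring_law p -> classM1 p -> ~ pgf_linear p ->
  (* lim_{s in S, ||1-s|| -> 0} sup_i |eps_{2,i}(1-s)| / ||1-s|| = 0 *)
  (forall e : R, 0 < e -> exists2 d : R, 0 < d &
     forall s, Sset s -> normInf s < d ->
       forall i, `|eps2 p s i| <= e * normInf s) /\
  (* lim_n sup_{s in S, i} |eps_{2,i}(Q(n-1;s))| / Qcal(n-1;s) = 0 *)
  (forall e : R, 0 < e -> exists N : nat, forall n, (N <= n)%N ->
     forall s, Sset s ->
       forall i, `|eps2 p (pgfn p n.-1 s) i| <= e * Qsup p n.-1 s).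
Proof.
move=> [p0 p1] [Mi_fin [irr [_ [_ [_ [_ [[v [_ [v_gt0 [_ [v_eigen [_ [_ [v_sum1 _]]]]]]]]
  [type_tail_small sumn_tail_small]]]]]]]] nonlinear.
have first_order := eps2_small p0 p1 Mi_fin sumn_tail_small.
have ext := certain_extinction_of_nonlinear p0 p1 v_gt0 v_eigen v_sum1 irr nonlinear.
split=> e /first_order [d d0 small].
  exists d => // s [s01 _] s_near i; apply: small s_near i => //.
  by move=> j; apply: (le_sup_range (b := 1)) => k; case/andP: (s01 k) => s0 _; lra.
have [N extN] := extinction_uniform p0 p1 Mi_fin sumn_tail_small type_tail_small ext
  (divr_gt0 d0 (ltr0Sn R 1)).
exists N.+1 => -[//|n] Nn s [s01 _] i /=; have t01 := pgfn_cube p0 p1 n s01.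
apply: small i => //.
  move=> j; apply: (le_sup_range (b := 1)) => k.
  by case/andP: (t01 k) => t0 _; rewrite /Qn; lra.
apply: le_lt_trans (sup_range_le (fun k => extN n Nn s s01 k)) _; lra.
Qed.
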